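(* Let $\mathbb{L}=(\mathcal{P},\mathcal{C},\parallel)$ be a Laguerre plane satisfying axiom (C). If $K,L,M$ are circles which are pairwise tangent, then they are all tangent at one and the same point, i.e. there is a point $p$ such that any two of $K,L,M$ are tangent at $p$.
   Context: A Laguerre plane is a triple $(\mathcal{P},\mathcal{C},\parallel)$ where $\mathcal{P}$ is a set of points, $\mathcal{C}\subset 2^{\mathcal{P}}$ a set of circles and $\parallel$ an equivalence relation on $\mathcal{P}$ (parallelism; its classes are called generators) such that: (1) any three pairwise non-parallel points lie on a unique circle; (2) for every circle $K$ and non-parallel points $p\in K$, $q\notin K$ there is exactly one circle $L$ with $q\in L$ and $K\cap L=\{p\}$; (3) for every point $p$ and circle $K$ there is exactly one point $q\in K$ with $q\parallel p$; (4) some circle contains at least three but not all points. Circles $K,L$ are tangent at $p$ if $K\cap L=\{p\}$ or $K=L$ (with $p\in K$); $K,L$ are tangent if they are tangent at some point. For $p\in K$, $\langle p,K\rangle$ denotes the set of circles tangent to $K$ at $p$. Axiom (C): for any circles $K,L$ and any point $p\in K\setminus L$ there exists exactly one circle $M\in\langle p,K\rangle$ with $|M\cap L|=1$. *)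

From Stdlib Require Import RelationClasses.

(* Equality of circles is Leibniz
   equality of predicates (= set equality under extensionality). *)

Definition tangent_at {P : Type} (K L : P -> Prop) (p : P) : Prop :=
  (forall x, (K x /\ L x) <-> x = p) \/ (K = L /\ K p).

Definition tangent {P : Type} (K L : P -> Prop) : Prop :=
  exists p, tangent_at K L p.

Record laguerre_plane (P : Type) (circle : (P -> Prop) -> Prop)
    (par : P -> P -> Prop) : Prop := {
  lp_equiv : Equivalence par;
  lp_ax1 : forall p q r, ~ par p q -> ~ par p r -> ~ par q r ->
      exists K, (circle K /\ K p /\ K q /\ K r) /\
        forall K', circle K' /\ K' p /\ K' q /\ K' r -> K' = K;
  lp_ax2 : forall (K : P -> Prop) p q, circle K -> K p -> ~ K q -> ~ par p q ->
      exists L, (circle L /\ L q /\ (forall x, (K x /\ L x) <-> x = p)) /\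
        forall L', circle L' /\ L' q /\ (forall x, (K x /\ L' x) <-> x = p) ->
          L' = L;
  lp_ax3 : forall p (K : P -> Prop), circle K ->
      exists q, (K q /\ par q p) /\ forall q', K q' /\ par q' p -> q' = q;
  lp_ax4 : exists K, circle K /\
      (exists a b c, K a /\ K b /\ K c /\ a <> b /\ a <> c /\ b <> c) /\
      (exists x, ~ K x)
}.

Definition axiom_C (P : Type) (circle : (P -> Prop) -> Prop) : Prop :=
  forall (K L : P -> Prop) p, circle K -> circle L -> K p -> ~ L p ->
    exists M, (circle M /\ tangent_at K M p /\
                 exists y, forall x, (M x /\ L x) <-> x = y) /\
      forall M', circle M' /\ tangent_at K M' p /\
                 (exists y, forall x, (M' x /\ L x) <-> x = y) -> M' = M.

(* If K meets L only in p and M misses p, then both L and K itself are circles tangent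
   to K at p meeting M in exactly one point, so the uniqueness in axiom (C) forces
   L = K, which is absurd.  Hence three pairwise tangent circles, no two of them equal,
   share the tangency point of any one pair.  Equal circles are tangent to each other
   at every one of their points, which settles the remaining cases. *)

From Stdlib Require Import Classical.

Section Tangency.

Context {P : Type}.
Implicit Types (K L : P -> Prop) (p : P).

Lemma tangent_at_mem K L p : tangent_at K L p -> K p /\ L p.
Proof.
  intros [Hmeet | [<- Hp]].
  - now apply Hmeet.
  - now split.
Qed.

Lemma tangent_at_sym K L p : tangent_at K L p -> tangent_at L K p.
Proof.
  intros [Hmeet | [<- Hp]].
  - left; intro x; rewrite <- (Hmeet x); tauto.
  - now right.
Qed.

Lemma tangent_at_refl K p : K p -> tangent_at K K p.
Proof. now right. Qed.

End Tangency.

Section AxiomC.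

Variables (P : Type) (circle : (P -> Prop) -> Prop).
Hypothesis axC : axiom_C P circle.

Lemma axiom_C_unique (K M N1 N2 : P -> Prop) p :
  circle K -> circle M -> K p -> ~ M p ->
  circle N1 -> tangent_at K N1 p -> (exists y, forall x, N1 x /\ M x <-> x = y) ->
  circle N2 -> tangent_at K N2 p -> (exists y, forall x, N2 x /\ M x <-> x = y) ->
  N1 = N2.
Proof.
  intros cK cM Kp nMp cN1 tN1 mN1 cN2 tN2 mN2.
  destruct (axC K M p cK cM Kp nMp) as [N [_ uniq]].
  rewrite (uniq N1), (uniq N2); auto.
Qed.

Lemma tangency_point_on_third_circle (K L M : P -> Prop) p q :
  circle K -> circle L -> circle M ->
  (forall x, K x /\ L x <-> x = p) ->
  (forall x, K x /\ M x <-> x = q) ->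
  (exists y, forall x, L x /\ M x <-> x = y) ->
  M p.
Proof.
  intros cK cL cM KLp KMq LMonce.
  destruct (proj2 (KLp p) eq_refl) as [Kp Lp].
  destruct (classic (M p)) as [Mp | nMp]; [exact Mp |].
  assert (LK : L = K).
  { apply (axiom_C_unique K M L K p); auto.
    - now left.
    - now apply tangent_at_refl.
    - now exists q. }
  destruct (proj2 (KMq q) eq_refl) as [Kq Mq].
  assert (q = p) as -> by (apply KLp; rewrite LK; auto).
  contradiction.
Qed.

End AxiomC.

(* Only the uniqueness part of axiom (C) is needed; the Laguerre plane axioms are not. *)
Theorem proposition2p1 (P : Type) (circle : (P -> Prop) -> Prop)
    (par : P -> P -> Prop) :
  laguerre_plane P circle par -> axiom_C P circle ->
  forall K L M : P -> Prop, circle K -> circle L -> circle M ->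
    tangent K L -> tangent L M -> tangent K M ->
    exists p, tangent_at K L p /\ tangent_at L M p /\ tangent_at K M p.
Proof.
  intros _ axC K L M cK cL cM [p tKL] [q tLM] [r tKM].
  destruct tKL as [KLp | [<- Kp]].
  2:{ destruct (tangent_at_mem _ _ _ tKM) as [Kr _].
      exists r; auto using tangent_at_refl. }
  assert (tKL : tangent_at K L p) by now left.
  destruct (tangent_at_mem _ _ _ tKL) as [Kp Lp].
  destruct tLM as [LMq | [<- _]].
  2:{ exists p; auto using tangent_at_refl. }
  destruct tKM as [KMr | [<- _]].
  2:{ exists p; auto using tangent_at_refl, tangent_at_sym. }
  assert (Mp : M p).
  { apply (tangency_point_on_third_circle P circle axC K L M p r); auto.
    now exists q. }
  assert (r = p) as -> by (symmetry; apply KMr; auto).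
  assert (q = p) as -> by (symmetry; apply LMq; auto).
  exists p; split; [exact tKL | split; now left].
Qed.
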